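(* Let $\Phi(z)=\sum_{n\ge1}\varphi_nz^n$ be the power series, analytic near $0$, with $\varphi_1=1$ satisfying $$\int_0^1\Phi\big(rz+(1-r)z^2\big)\,dr=\tfrac12\,\Phi(z).$$ Then $F(z)=\int_0^z\Phi(\zeta)d\zeta$ satisfies $\frac{F(z)-F(z^2)}{z-z^2}=\frac12F'(z)$, and for all $n\ge2$: $$\varphi_n=\frac{n+1}{n-1}\varphi_{n-1}\ \text{ if $n$ is even},\qquad \varphi_n=\frac{n+1}{n-1}\varphi_{n-1}-\frac{4}{n-1}\varphi_{(n-1)/2}\ \text{ if $n$ is odd}.$$ Equivalently, $\psi_n=\varphi_n/n$ satisfies $\psi_1=1$, $\psi_n=(1+\frac1n)\psi_{n-1}$ for even $n$, and $\psi_n=(1+\frac1n)\psi_{n-1}-\frac2n\psi_{(n-1)/2}$ for odd $n\ge3$.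
   Context: This is the equation $\int\Phi(P_r(z))\mu(dr)=\Phi(z)\int p_{1r}\mu(dr)$ for $P_r(z)=rz+(1-r)z^2$ with $r$ uniformly distributed on $(0,1)$. *)

From Stdlib Require Import Reals.
From Coquelicot Require Import Coquelicot.
Open Scope R_scope.

Definition Phi (phi : nat -> R) (z : R) : R := PSeries phi z.

Definition Fint (phi : nat -> R) (z : R) : R := RInt (Phi phi) 0 z.

Definition Pr (r z : R) : R := r * z + (1 - r) * z ^ 2.

Definition psi (phi : nat -> R) (n : nat) : R := phi n / INR n.

(* Substituting zeta = P_r(z) = z^2 + r (z - z^2) in the mean-value hypothesis gives
   F(z) - F(z^2) = (z - z^2) Phi(z) / 2 near 0.  Both sides are power series, so the
   series of their difference vanishes identically.  Its coefficient of z^(n+1) gives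
   the recurrence: F(z^2) contributes phi_((n-1)/2) / ((n+1)/2) there only for odd n.
   The recurrence for psi is the same one divided by n. *)

From Stdlib Require Import Reals Arith Lra Lia.
From Coquelicot Require Import Coquelicot.
Open Scope R_scope.

Lemma is_lim_seq_bounded (u : nat -> R) (l : R) :
  is_lim_seq u l -> exists M, forall n, Rabs (u n) <= M.
Proof.
  intros Hu. apply is_lim_seq_abs, is_lim_seq_Reals in Hu.
  destruct (cauchy_bound _ (CV_Cauchy _ (exist _ _ Hu))) as [M HM].
  exists M. intros n. apply HM. now exists n.
Qed.

Lemma CV_radius_minus (a b : nat -> R) :
  Rbar_le (Rbar_min (CV_radius a) (CV_radius b)) (CV_radius (PS_minus a b)).
Proof. rewrite <- (CV_radius_opp b). apply CV_radius_plus. Qed.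

Lemma Rbar_le_min (x a b : Rbar) : Rbar_le x a -> Rbar_le x b -> Rbar_le x (Rbar_min a b).
Proof. intros. now apply Rbar_min_case_strong. Qed.

Lemma Rbar_lt_exists_pos (rho : Rbar) (d : R) :
  Rbar_lt 0 rho -> 0 < d -> exists r, 0 < r <= d /\ Rbar_lt r rho.
Proof.
  intros Hrho Hd. destruct rho as [p| |]; simpl in Hrho; try easy.
  - exists (Rmin d (p / 2)). simpl.
    split; [split; [apply Rmin_glb_lt|apply Rmin_l]|]; try lra.
    apply Rle_lt_trans with (p / 2); [apply Rmin_r|lra].
  - now exists d.
Qed.

Lemma Rbar_lt_Rabs_sqr (z : R) (rho : Rbar) :
  Rabs z <= 1 -> Rbar_lt (Rabs z) rho -> Rbar_lt (Rabs (z ^ 2)) rho.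
Proof.
  intros Hz1 Hz. apply (Rbar_le_lt_trans _ (Rabs z)); [|easy].
  change (Rabs (z ^ 2) <= Rabs z). rewrite <- RPow_abs.
  pose proof (Rabs_pos z). simpl. nra.
Qed.

Lemma even_double (k : nat) : Nat.even (2 * k) = true.
Proof. rewrite Nat.even_mul. reflexivity. Qed.

Lemma even_double_succ (k : nat) : Nat.even (2 * k + 1) = false.
Proof. rewrite Nat.add_comm, Nat.even_add_mul_2. reflexivity. Qed.

Lemma odd_pred_half (n : nat) : Nat.even n = false -> n = (2 * ((n - 1) / 2) + 1)%nat.
Proof.
  intros Hn. destruct (Nat.Even_or_Odd n) as [[k ->]|[k ->]].
  - now rewrite even_double in Hn.
  - rewrite Nat.add_sub, Nat.mul_comm, Nat.div_mul; lia.
Qed.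

Definition PS_comp_sqr (a : nat -> R) (n : nat) : R :=
  if Nat.even n then a (Nat.div2 n) else 0.

Lemma PS_comp_sqr_even (a : nat -> R) (k : nat) : PS_comp_sqr a (2 * k) = a k.
Proof. unfold PS_comp_sqr. now rewrite even_double, Nat.div2_double. Qed.

Lemma PS_comp_sqr_odd (a : nat -> R) (n : nat) : Nat.even n = false -> PS_comp_sqr a n = 0.
Proof. unfold PS_comp_sqr. now intros ->. Qed.

Lemma is_pseries_comp_sqr (a : nat -> R) (z l : R) :
  is_pseries a (z ^ 2) l -> is_pseries (PS_comp_sqr a) z l.
Proof.
  intros Ha. replace l with (l + z * 0) by ring.
  apply is_pseries_odd_even.
  - apply (is_pseries_ext a); [|easy]. intros n. now rewrite PS_comp_sqr_even.
  - apply (is_pseries_ext (fun _ => 0)).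
    + intros n. now rewrite PS_comp_sqr_odd by apply even_double_succ.
    + assert (H0 : ex_pseries (fun _ : nat => 0) (z ^ 2))
        by (apply CV_radius_inside; now rewrite CV_radius_const_0).
      generalize (PSeries_correct _ _ H0). now rewrite PSeries_const_0.
Qed.

Lemma PSeries_comp_sqr (a : nat -> R) (z : R) :
  ex_pseries a (z ^ 2) -> PSeries (PS_comp_sqr a) z = PSeries a (z ^ 2).
Proof. intros Ha. now apply is_pseries_unique, is_pseries_comp_sqr, PSeries_correct. Qed.

Lemma CV_radius_ge_ex_pseries (a : nat -> R) (r : R) :
  0 <= r -> ex_pseries a r -> Rbar_le r (CV_radius a).
Proof.
  intros Hr Ha.
  destruct (is_lim_seq_bounded _ _ (ex_series_lim_0 _ Ha)) as [M HM].
  apply (CV_radius_bounded a). exists M. intros n.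
  rewrite Rmult_comm. exact (HM n).
Qed.

Lemma CV_radius_comp_sqr (a : nat -> R) (r : R) :
  0 <= r -> Rbar_lt (r ^ 2) (CV_radius a) -> Rbar_le r (CV_radius (PS_comp_sqr a)).
Proof.
  intros Hr Hrad. apply CV_radius_ge_ex_pseries; [easy|].
  exists (PSeries a (r ^ 2)). apply is_pseries_comp_sqr, PSeries_correct, CV_radius_inside.
  now rewrite Rabs_right by (apply Rle_ge, pow2_ge_0).
Qed.

Lemma PSeries_zero_coef (a : nat -> R) (r : R) :
  0 < r -> Rbar_le r (CV_radius a) ->
  (forall z, Rabs z < r -> PSeries a z = 0) -> forall n, a n = 0.
Proof.
  intros Hr Hrad Hzero n.
  assert (Hcoef := Derive_n_coef a n (Rbar_lt_le_trans 0 r _ Hr Hrad)).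
  assert (Hconst : forall m, Derive_n (fun _ => 0) m 0 = 0)
    by (intros [|m]; [easy|apply Derive_n_const]).
  rewrite (Derive_n_ext_loc _ (fun _ => 0)), Hconst in Hcoef.
  - symmetry in Hcoef. apply Rmult_integral in Hcoef as [Hcoef|Hcoef]; [easy|].
    now apply INR_fact_neq_0 in Hcoef.
  - exists (mkposreal r Hr). intros y Hy. apply Hzero.
    change (Rabs (y - 0) < r) in Hy. now rewrite Rminus_0_r in Hy.
Qed.

Lemma is_RInt_Pr (f : R -> R) (z : R) :
  ex_RInt f (z ^ 2) z ->
  is_RInt (fun r => (z - z ^ 2) * f (Pr r z)) 0 1 (RInt f (z ^ 2) z).
Proof.
  intros Hf.
  apply (is_RInt_ext (V := R_CompleteNormedModule)
           (fun r => scal (z - z ^ 2) (f ((z - z ^ 2) * r + z ^ 2)))).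
  - intros r _. unfold Pr.
    replace (r * z + (1 - r) * z ^ 2) with ((z - z ^ 2) * r + z ^ 2) by ring.
    reflexivity.
  - apply (is_RInt_comp_lin f).
    replace ((z - z ^ 2) * 0 + z ^ 2) with (z ^ 2) by ring.
    replace ((z - z ^ 2) * 1 + z ^ 2) with z by ring.
    now apply (RInt_correct (V := R_CompleteNormedModule)).
Qed.

Lemma sub_sqr_neq0 (z : R) : 0 < Rabs z < 1 -> z - z ^ 2 <> 0.
Proof.
  intros [Hz0 Hz1] Heq.
  assert (Hz : z = 0 \/ 1 - z = 0) by (apply Rmult_integral; rewrite <- Heq; ring).
  destruct Hz as [->| Hz]; [rewrite Rabs_R0 in Hz0; lra|].
  replace z with 1 in Hz1 by lra. rewrite Rabs_R1 in Hz1. lra.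
Qed.

Section Coefficients.

Variable phi : nat -> R.

Lemma Fint_PSeries (z : R) :
  Rbar_lt (Rabs z) (CV_radius phi) -> Fint phi z = PSeries (PS_Int phi) z.
Proof. exact (RInt_PSeries phi z). Qed.

Lemma is_derive_Fint (r z : R) :
  Rbar_le r (CV_radius phi) -> Rabs z < r -> is_derive (Fint phi) z (Phi phi z).
Proof.
  intros Hrad Hz. apply (is_derive_RInt (Phi phi) (Fint phi) 0).
  - assert (Heps : 0 < r - Rabs z) by lra.
    exists (mkposreal _ Heps). intros y Hy. change (Rabs (y - z) < r - Rabs z) in Hy.
    apply (RInt_correct (V := R_CompleteNormedModule)), ex_RInt_PSeries.
    apply (Rbar_lt_le_trans _ r); [|easy]. simpl.
    pose proof (Rabs_triang_inv y z). lra.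
  - apply ex_derive_continuous, ex_derive_PSeries.
    now apply (Rbar_lt_le_trans _ r).
Qed.

Lemma Fint_sub_sqr_mean (z : R) :
  Rabs z <= 1 -> Rbar_lt (Rabs z) (CV_radius phi) ->
  is_RInt (fun r => Phi phi (Pr r z)) 0 1 (Phi phi z / 2) ->
  Fint phi z - Fint phi (z ^ 2) = (z - z ^ 2) * (Phi phi z / 2).
Proof.
  intros Hz1 Hz Hmean.
  assert (H0z2 : ex_RInt (Phi phi) 0 (z ^ 2))
    by now apply ex_RInt_PSeries, Rbar_lt_Rabs_sqr.
  assert (H0z : ex_RInt (Phi phi) 0 z) by now apply ex_RInt_PSeries.
  assert (Hz2z : ex_RInt (Phi phi) (z ^ 2) z)
    by (apply (ex_RInt_Chasles _ _ 0); [apply ex_RInt_swap|]; easy).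
  assert (Hsum : RInt (Phi phi) 0 (z ^ 2) + RInt (Phi phi) (z ^ 2) z = RInt (Phi phi) 0 z)
    by exact (RInt_Chasles (V := R_CompleteNormedModule) _ _ _ _ H0z2 Hz2z).
  assert (Hchange : RInt (Phi phi) (z ^ 2) z = (z - z ^ 2) * (Phi phi z / 2)).
  { rewrite <- (is_RInt_unique _ _ _ _ (is_RInt_Pr _ _ Hz2z)).
    apply is_RInt_unique. exact (is_RInt_scal _ _ _ (z - z ^ 2) _ Hmean). }
  unfold Fint. lra.
Qed.

Definition fe_defect : nat -> R :=
  PS_minus (PS_Int phi)
    (PS_plus (PS_comp_sqr (PS_Int phi))
       (PS_scal (/ 2) (PS_minus (PS_incr_1 phi) (PS_incr_1 (PS_incr_1 phi))))).

Lemma CV_radius_fe_defect (r : R) :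
  0 <= r <= 1 -> Rbar_lt r (CV_radius phi) -> Rbar_le r (CV_radius fe_defect).
Proof.
  intros Hr Hrad. apply Rbar_lt_le in Hrad as Hle.
  assert (Hsqr : Rbar_le r (CV_radius (PS_comp_sqr (PS_Int phi)))).
  { apply CV_radius_comp_sqr; [lra|]. rewrite CV_radius_Int.
    apply (Rbar_le_lt_trans _ r); [simpl; nra|easy]. }
  eapply Rbar_le_trans; [|apply CV_radius_minus].
  apply Rbar_le_min; [now rewrite CV_radius_Int|].
  eapply Rbar_le_trans; [|apply CV_radius_plus]. apply Rbar_le_min; [easy|].
  rewrite CV_radius_scal by (apply Rinv_neq_0_compat; lra).
  eapply Rbar_le_trans; [|apply CV_radius_minus].
  now apply Rbar_le_min; rewrite !CV_radius_incr_1.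
Qed.

Lemma PSeries_fe_defect (z : R) :
  Rabs z <= 1 -> Rbar_lt (Rabs z) (CV_radius phi) ->
  PSeries fe_defect z = Fint phi z - Fint phi (z ^ 2) - (z - z ^ 2) * (Phi phi z / 2).
Proof.
  intros Hz1 Hz.
  assert (Hz2 : Rbar_lt (Rabs (z ^ 2)) (CV_radius phi)) by now apply Rbar_lt_Rabs_sqr.
  assert (Hphi : ex_pseries phi z) by now apply CV_radius_inside.
  assert (Hincr1 : ex_pseries (PS_incr_1 phi) z) by now apply ex_pseries_incr_1.
  assert (Hincr2 : ex_pseries (PS_incr_1 (PS_incr_1 phi)) z) by now apply ex_pseries_incr_1.
  assert (Hscal : ex_pseries
            (PS_scal (/ 2) (PS_minus (PS_incr_1 phi) (PS_incr_1 (PS_incr_1 phi)))) z)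
    by (apply ex_pseries_scal; [apply Rmult_comm|now apply ex_pseries_minus]).
  assert (Hint : ex_pseries (PS_Int phi) z)
    by (apply CV_radius_inside; now rewrite CV_radius_Int).
  assert (Hint2 : ex_pseries (PS_Int phi) (z ^ 2))
    by (apply CV_radius_inside; now rewrite CV_radius_Int).
  assert (Hsqr : ex_pseries (PS_comp_sqr (PS_Int phi)) z)
    by (eexists; apply is_pseries_comp_sqr, PSeries_correct, Hint2).
  unfold fe_defect.
  rewrite PSeries_minus by (try apply ex_pseries_plus; easy).
  rewrite PSeries_plus, PSeries_scal, PSeries_minus, !PSeries_incr_1, PSeries_comp_sqr
    by easy.
  rewrite <- !Fint_PSeries by easy. unfold Phi. field.
Qed.

Lemma fe_defect_coef (n : nat) : (1 <= n)%nat ->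
  fe_defect (S n) =
  phi n / INR (S n) - PS_comp_sqr (PS_Int phi) (S n) - / 2 * (phi n - phi (n - 1)%nat).
Proof.
  intros Hn. destruct n as [|m]; [lia|]. rewrite Nat.sub_succ, Nat.sub_0_r.
  unfold fe_defect, PS_minus, PS_plus, PS_scal, PS_incr_1.
  change plus with Rplus. change opp with Ropp. change scal with Rmult.
  change (PS_Int phi (S (S m))) with (phi (S m) / INR (S (S m))).
  lra.
Qed.

Lemma phi_recurrence (n : nat) : (2 <= n)%nat -> fe_defect (S n) = 0 ->
  phi n = (INR n + 1) / (INR n - 1) * phi (n - 1)%nat
          - 2 * (INR n + 1) / (INR n - 1) * PS_comp_sqr (PS_Int phi) (S n).
Proof.
  intros Hn Hdef. rewrite fe_defect_coef, S_INR in Hdef by lia.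
  assert (Hx : 2 <= INR n) by (apply (le_INR 2); lia).
  apply Rminus_diag_uniq. rewrite <- (Rmult_0_r (- 2 * (INR n + 1) / (INR n - 1))), <- Hdef.
  field. lra.
Qed.

Lemma phi_recurrence_even (n : nat) : (2 <= n)%nat -> Nat.even n = true ->
  fe_defect (S n) = 0 -> phi n = (INR n + 1) / (INR n - 1) * phi (n - 1)%nat.
Proof.
  intros Hn Heven Hdef. rewrite (phi_recurrence n Hn Hdef).
  rewrite PS_comp_sqr_odd by now rewrite Nat.even_succ, <- Nat.negb_even, Heven.
  ring.
Qed.

Lemma phi_recurrence_odd (n : nat) : (2 <= n)%nat -> Nat.even n = false ->
  fe_defect (S n) = 0 ->
  phi n = (INR n + 1) / (INR n - 1) * phi (n - 1)%nat
          - 4 / (INR n - 1) * phi ((n - 1) / 2)%nat.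
Proof.
  intros Hn Hodd Hdef. rewrite (phi_recurrence n Hn Hdef).
  assert (Hx : 2 <= INR n) by (apply (le_INR 2); lia).
  pose proof (odd_pred_half n Hodd) as Hk. set (k := ((n - 1) / 2)%nat) in *.
  replace (S n) with (2 * S k)%nat by lia. rewrite PS_comp_sqr_even.
  change (PS_Int phi (S k)) with (phi k / INR (S k)).
  assert (Hhalf : INR (S k) = (INR n + 1) / 2)
    by (rewrite Hk, S_INR, plus_INR, mult_INR; simpl; field).
  rewrite Hhalf. field. lra.
Qed.

End Coefficients.

Lemma psi_recurrence_even (phi : nat -> R) (n : nat) : (2 <= n)%nat ->
  phi n = (INR n + 1) / (INR n - 1) * phi (n - 1)%nat ->
  psi phi n = (1 + / INR n) * psi phi (n - 1)%nat.
Proof.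
  intros Hn Hphi. assert (Hx : 2 <= INR n) by (apply (le_INR 2); lia).
  unfold psi. rewrite Hphi, minus_INR by lia. simpl (INR 1). field. lra.
Qed.

Lemma psi_recurrence_odd (phi : nat -> R) (n : nat) : (2 <= n)%nat -> Nat.even n = false ->
  phi n = (INR n + 1) / (INR n - 1) * phi (n - 1)%nat
          - 4 / (INR n - 1) * phi ((n - 1) / 2)%nat ->
  psi phi n = (1 + / INR n) * psi phi (n - 1)%nat
              - 2 / INR n * psi phi ((n - 1) / 2)%nat.
Proof.
  intros Hn Hodd Hphi. assert (Hx : 2 <= INR n) by (apply (le_INR 2); lia).
  pose proof (odd_pred_half n Hodd) as Hk. set (k := ((n - 1) / 2)%nat) in *.
  assert (Hhalf : INR k = (INR n - 1) / 2)
    by (rewrite Hk, plus_INR, mult_INR; simpl; field).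
  unfold psi. rewrite Hphi, minus_INR, Hhalf by lia. simpl (INR 1). field. lra.
Qed.

Theorem mainTheorem5 (phi : nat -> R) :
  phi 0%nat = 0 ->
  phi 1%nat = 1 ->
  Rbar_lt (Finite 0) (CV_radius phi) ->
  (exists delta : R, 0 < delta /\
     forall z : R, Rabs z < delta ->
       is_RInt (fun r => Phi phi (Pr r z)) 0 1 (Phi phi z / 2)) ->
  (exists delta : R, 0 < delta /\
     forall z : R, 0 < Rabs z < delta ->
       (Fint phi z - Fint phi (z ^ 2)) / (z - z ^ 2) = / 2 * Derive (Fint phi) z)
  /\
  (forall n : nat, (2 <= n)%nat ->
     (Nat.even n = true ->
        phi n = (INR n + 1) / (INR n - 1) * phi (n - 1)%nat) /\
     (Nat.even n = false ->
        phi n = (INR n + 1) / (INR n - 1) * phi (n - 1)%nat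
                - 4 / (INR n - 1) * phi ((n - 1) / 2)%nat))
  /\
  (psi phi 1%nat = 1 /\
   forall n : nat, (2 <= n)%nat ->
     (Nat.even n = true ->
        psi phi n = (1 + / INR n) * psi phi (n - 1)%nat) /\
     (Nat.even n = false ->
        psi phi n = (1 + / INR n) * psi phi (n - 1)%nat
                    - 2 / INR n * psi phi ((n - 1) / 2)%nat)).
Proof.
  intros _ Hphi1 Hrad [d [Hd Hmean]].
  assert (Hmin : 0 < Rmin 1 d) by (apply Rmin_glb_lt; lra).
  destruct (Rbar_lt_exists_pos _ _ Hrad Hmin) as [r [[Hr Hrmin] Hrphi]].
  pose proof (Rmin_l 1 d). pose proof (Rmin_r 1 d).
  assert (Hdisk : forall z, Rabs z < r -> Rabs z <= 1 /\ Rbar_lt (Rabs z) (CV_radius phi))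
    by (split; [lra|now apply (Rbar_lt_trans _ r)]).
  assert (Hfe : forall z, Rabs z < r ->
            Fint phi z - Fint phi (z ^ 2) = (z - z ^ 2) * (Phi phi z / 2)).
  { intros z Hz. destruct (Hdisk z Hz). apply Fint_sub_sqr_mean; try easy.
    apply Hmean. lra. }
  assert (Hcoef : forall n, fe_defect phi n = 0).
  { apply (PSeries_zero_coef _ r Hr); [apply CV_radius_fe_defect; [lra|easy]|].
    intros z Hz. destruct (Hdisk z Hz). rewrite PSeries_fe_defect, Hfe by easy. ring. }
  split; [|split; [|split]].
  - exists r. split; [easy|]. intros z [Hz0 Hz]. destruct (Hdisk z Hz).
    rewrite (is_derive_unique _ _ _ (is_derive_Fint phi r z (Rbar_lt_le _ _ Hrphi) Hz)).
    rewrite Hfe by easy. field. apply sub_sqr_neq0. lra.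
  - intros n Hn. split; intros Hpar.
    + now apply phi_recurrence_even.
    + now apply phi_recurrence_odd.
  - unfold psi. rewrite Hphi1. simpl. field.
  - intros n Hn. split; intros Hpar.
    + now apply psi_recurrence_even, phi_recurrence_even.
    + now apply psi_recurrence_odd, phi_recurrence_odd.
Qed.
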